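(* Let $\mathcal N$ and $\mathcal M$ be quantum channels satisfying $s$-detailed balance with respect to $\rho_\beta$, with $\mathcal N$ having $\rho_\beta$ as unique fixed state and spectrum in $[0,1]$. Let $\{Y_i\}_i$, $\lambda_i$, $\alpha_{ij}$ and $\mathrm{SC}$ be as defined in the context. If the map $\widehat{\mathcal M}$ satisfies $s$-detailed balance with respect to $\rho_\beta$, then $\mathrm{SC}\le\mathrm{Cov}_{\rho_\beta}(\mathcal M)$.
   Context: $H$ is an $n$-qubit Hermitian operator, $\beta>0$, $\rho_\beta=e^{-\beta H}/\operatorname{tr}(e^{-\beta H})$. $\mathcal T^\dagger$ denotes the Hilbert–Schmidt adjoint of a linear map $\mathcal T$ (for a channel with Kraus operators $K_u$, $\mathcal T^\dagger(X)=\sum_uK_u^\dagger XK_u$). $\langle A,B\rangle_s=\operatorname{tr}(A^\dagger\rho_\beta^{1-s}B\rho_\beta^s)$; a linear map $\mathcal T$ satisfies $s$-detailed balance if $\langle A,\mathcal T^\dagger(B)\rangle_s=\langle\mathcal T^\dagger(A),B\rangle_s$ for all $A,B$. $\mathcal M$ has Kraus operators $\{O_u\}_u$ indexed by finitely many real outcomes $u$; $\mathbb E_{\rho_\beta}(\mathcal M)=\sum_uu\operatorname{tr}(O_u\rho_\beta O_u^\dagger)$, $\mathrm{Cov}_{\rho_\beta}(\mathcal M)=\sum_{x,y}(x-\mathbb E_{\rho_\beta}(\mathcal M))(y-\mathbb E_{\rho_\beta}(\mathcal M))\operatorname{tr}(O_yO_x\rho_\beta O_x^\dagger O_y^\dagger)$,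 $\widehat{\mathcal M}(X)=\sum_u(u-\mathbb E_{\rho_\beta}(\mathcal M))O_uXO_u^\dagger$. Let $\mathcal E=\mathcal M\circ\mathcal N\circ\mathcal M$ and $\widehat{\mathcal E}=\mathcal M\circ\mathcal N\circ\widehat{\mathcal M}$. Let $\{Y_i\}_i$ be a basis of the $2^n\times2^n$ matrices, orthonormal w.r.t. $\langle\cdot,\cdot\rangle_s$, consisting of eigenvectors $\mathcal E^\dagger(Y_i)=\lambda_iY_i$ with $1=\lambda_1>\lambda_2\ge\lambda_3\ge\dots\ge0$ and $Y_1=I$. Define $\alpha_{ij}=\langle Y_j,\widehat{\mathcal E}^\dagger(Y_i)\rangle_s$ and the spectral covariance weight $\mathrm{SC}=\sum_j|\alpha_{1j}\alpha_{j1}|$. *)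

From HB Require Import structures.
From mathcomp Require Import all_boot all_order all_algebra.
From mathcomp Require Import complex.
From mathcomp Require Import reals interval_inference topology normedtype sequences exp.
Set Implicit Arguments. Unset Strict Implicit. Unset Printing Implicit Defensive.
Import Order.TTheory GRing.Theory Num.Theory.
Local Open Scope ring_scope.

Definition q_adjmx (R : realType) (m k : nat) (A : 'M[R[i]]_(m, k)) : 'M[R[i]]_(k, m) :=
  (map_mx (fun z : R[i] => z^*) A)^T.

(* positive semidefinite (w.r.t. the order of C, which forces reality) *)
Definition q_is_psd (R : realType) (d : nat) (A : 'M[R[i]]_d) : Prop :=
  forall v : 'cV[R[i]]_d, 0 <= (q_adjmx v *m A *m v) 0 0.

Definition q_is_state (R : realType) (d : nat) (A : 'M[R[i]]_d) : Prop :=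
  q_is_psd A /\ \tr A = 1.

Definition q_is_unitary (R : realType) (d : nat) (U : 'M[R[i]]_d) : Prop :=
  q_adjmx U *m U = 1%:M.

Definition q_specfun (R : realType) (d : nat) (U : 'M[R[i]]_d) (ev : 'I_d -> R)
    (f : R -> R) : 'M[R[i]]_d :=
  U *m diag_mx (\row_j ((f (ev j))%:C)%C) *m q_adjmx U.

Definition q_gibbs_weight (R : realType) (d : nat) (beta : R) (ev : 'I_d -> R)
    (x : R) : R :=
  expR (- beta * x) / \sum_(k < d) expR (- beta * ev k).

(* rho_beta = e^{-beta H} / tr e^{-beta H}, with H = U diag(ev) U^dagger *)
Definition q_gibbs (R : realType) (d : nat) (beta : R) (U : 'M[R[i]]_d)
    (ev : 'I_d -> R) : 'M[R[i]]_d :=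
  q_specfun U ev (q_gibbs_weight beta ev).

Definition q_gibbs_pow (R : realType) (d : nat) (beta : R) (U : 'M[R[i]]_d)
    (ev : 'I_d -> R) (p : R) : 'M[R[i]]_d :=
  q_specfun U ev (fun x => powR (q_gibbs_weight beta ev x) p).

Definition q_s_inner (R : realType) (d : nat) (beta : R) (U : 'M[R[i]]_d)
    (ev : 'I_d -> R) (s : R) (A B : 'M[R[i]]_d) : R[i] :=
  \tr (q_adjmx A *m q_gibbs_pow beta U ev (1 - s) *m B *m q_gibbs_pow beta U ev s).

Definition q_kraus_map (R : realType) (d : nat) (I : finType) (K : I -> 'M[R[i]]_d)
    (X : 'M[R[i]]_d) : 'M[R[i]]_d :=
  \sum_(u : I) (K u *m X *m q_adjmx (K u)).

Definition q_kraus_adj (R : realType) (d : nat) (I : finType) (K : I -> 'M[R[i]]_d)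
    (X : 'M[R[i]]_d) : 'M[R[i]]_d :=
  \sum_(u : I) (q_adjmx (K u) *m X *m K u).

(* trace preserving (hence a quantum channel, being completely positive) *)
Definition q_is_channel (R : realType) (d : nat) (I : finType) (K : I -> 'M[R[i]]_d) : Prop :=
  \sum_(u : I) (q_adjmx (K u) *m K u) = 1%:M.

Definition q_s_detailed_balance (R : realType) (d : nat) (ip : 'M[R[i]]_d -> 'M[R[i]]_d -> R[i])
    (Tadj : 'M[R[i]]_d -> 'M[R[i]]_d) : Prop :=
  forall A B, ip A (Tadj B) = ip (Tadj A) B.

Definition q_meas_mean (R : realType) (d : nat) (J : finType) (O : J -> 'M[R[i]]_d)
    (out : J -> R) (rho : 'M[R[i]]_d) : R[i] :=
  \sum_(u : J) ((out u)%:C)%C * \tr (O u *m rho *m q_adjmx (O u)).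

Definition q_meas_cov (R : realType) (d : nat) (J : finType) (O : J -> 'M[R[i]]_d)
    (out : J -> R) (rho : 'M[R[i]]_d) : R[i] :=
  let m := q_meas_mean O out rho in
  \sum_(x : J) \sum_(y : J)
     (((out x)%:C)%C - m) * (((out y)%:C)%C - m) *
     \tr (O y *m O x *m rho *m q_adjmx (O x) *m q_adjmx (O y)).

Definition q_meas_hat (R : realType) (d : nat) (J : finType) (O : J -> 'M[R[i]]_d)
    (out : J -> R) (rho : 'M[R[i]]_d) (X : 'M[R[i]]_d) : 'M[R[i]]_d :=
  \sum_(u : J) ((((out u)%:C)%C - q_meas_mean O out rho) *: (O u *m X *m q_adjmx (O u))).

Definition q_meas_hat_adj (R : realType) (d : nat) (J : finType) (O : J -> 'M[R[i]]_d)
    (out : J -> R) (rho : 'M[R[i]]_d) (X : 'M[R[i]]_d) : 'M[R[i]]_d :=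
  \sum_(u : J) ((((out u)%:C)%C - q_meas_mean O out rho)^* *: (q_adjmx (O u) *m X *m O u)).

Lemma dim_sq_gt0 (n : nat) : (0 < 2 ^ n * 2 ^ n)%N.
Proof. by rewrite muln_gt0 expn_gt0. Qed.

(* the first index (i = 1 in the paper) of the 4^n basis elements *)
Definition idx1 (n : nat) : 'I_(2 ^ n * 2 ^ n) := Ordinal (dim_sq_gt0 n).

(* Put A := hat M^dagger(I).  Since N^dagger and M^dagger are unital and hat M^dagger is
   self-adjoint for <.,.>_s, alpha_1j = <Y_j, A>, alpha_j1 = <A, N^dagger M^dagger Y_j> and
   Cov(M) = <A, A>.  In coordinates a of A in the orthonormal basis Y, with c and p the
   Hermitian matrices of M^dagger and N^dagger, alpha_j1 is the conjugate of (c p a)_j.  Now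
   c p c = diag(lambda) <= 1 and, by detailed balance, 0 <= p <= 1; writing p = Q^dagger Q
   this gives |c p a| <= |Q a| <= |a|, and AM-GM yields
   sum_j |a_j| |(c p a)_j| <= (|a|^2 + |c p a|^2) / 2 <= |a|^2. *)

From HB Require Import structures.
From mathcomp Require Import all_boot all_order all_algebra.
From mathcomp Require Import complex.
From mathcomp Require Import reals interval_inference topology normedtype sequences exp.
From mathcomp Require Import sesquilinear spectral.
From mathcomp Require Import ring.
Import Order.TTheory GRing.Theory Num.Theory.
Local Open Scope ring_scope.
Set Implicit Arguments. Unset Strict Implicit. Unset Printing Implicit Defensive.

Section ConjugateTranspose.
Variable C : numClosedFieldType.

Definition adjmx (p q : nat) (A : 'M[C]_(p, q)) : 'M[C]_(q, p) :=
  (map_mx (fun z => z^*) A)^T.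

Lemma adjmxE p q (A : 'M[C]_(p, q)) i j : adjmx A i j = (A j i)^*.
Proof. by rewrite !mxE. Qed.

Lemma adjmxK p q (A : 'M[C]_(p, q)) : adjmx (adjmx A) = A.
Proof. by apply/matrixP => i j; rewrite !mxE conjCK. Qed.

Lemma adjmxM p q r (A : 'M[C]_(p, q)) (B : 'M[C]_(q, r)) :
  adjmx (A *m B) = adjmx B *m adjmx A.
Proof.
apply/matrixP => i j; rewrite !mxE rmorph_sum; apply: eq_bigr => k _.
by rewrite !mxE rmorphM mulrC.
Qed.

Lemma adjmxD p q (A B : 'M[C]_(p, q)) : adjmx (A + B) = adjmx A + adjmx B.
Proof. by apply/matrixP => i j; rewrite !mxE rmorphD. Qed.

Lemma adjmxN p q (A : 'M[C]_(p, q)) : adjmx (- A) = - adjmx A.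
Proof. by apply/matrixP => i j; rewrite !mxE rmorphN. Qed.

Lemma adjmxZ p q a (A : 'M[C]_(p, q)) : adjmx (a *: A) = a^* *: adjmx A.
Proof. by apply/matrixP => i j; rewrite !mxE rmorphM. Qed.

Lemma adjmx0 p q : adjmx (0 : 'M[C]_(p, q)) = 0.
Proof. by apply/matrixP => i j; rewrite !mxE rmorph0. Qed.

Lemma adjmx_diag p (l : 'rV[C]_p) :
  adjmx (diag_mx l) = diag_mx (map_mx (fun z => z^*) l).
Proof.
apply/matrixP => i j; rewrite !mxE eq_sym.
by case: eqP => [->|_]; rewrite ?mulr1n ?mulr0n ?rmorph0.
Qed.

Lemma adjmx_conj_diag p q (V : 'M[C]_(p, q)) (l : 'rV[C]_q) :
  (forall j, (l 0 j)^* = l 0 j) ->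
  adjmx (V *m diag_mx l *m adjmx V) = V *m diag_mx l *m adjmx V.
Proof.
move=> l_real; rewrite !adjmxM adjmxK adjmx_diag mulmxA.
by congr (_ *m diag_mx _ *m _); apply/matrixP => i j; rewrite mxE (ord1 i) l_real.
Qed.

Lemma adjmx_sesqui p q (A : 'M[C]_(p, q)) : (A ^t Num.conj)%sesqui = adjmx A.
Proof. by apply/matrixP => i j; rewrite !mxE. Qed.

Lemma conjC_mxtrace p (A : 'M[C]_p) : (\tr A)^* = \tr (adjmx A).
Proof. by rewrite /mxtrace rmorph_sum; apply: eq_bigr => i _; rewrite adjmxE. Qed.

Lemma mxtrace_adjmx_eq0 p (Z : 'M[C]_p) :
  (forall W, \tr (adjmx Z *m W) = 0) -> Z = 0.
Proof.
move=> Z_perp; apply/matrixP => i j; have := Z_perp (delta_mx i j).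
rewrite /mxtrace (bigD1 j) //= big1 => [|k kj]; last first.
  by rewrite mxE big1 // => l _; rewrite !mxE (negbTE kj) andbF mulr0.
rewrite addr0 mxE (bigD1 i) //= big1 => [|l li]; last by rewrite !mxE (negbTE li) mulr0.
by rewrite !mxE !eqxx mulr1 addr0 => /eqP; rewrite conjC_eq0 => /eqP.
Qed.

End ConjugateTranspose.

Section Contractions.
Variable C : numClosedFieldType.

Definition sqnorm p (x : 'cV[C]_p) : C := (adjmx x *m x) 0 0.

Lemma sqnormE p (x : 'cV[C]_p) : sqnorm x = \sum_j `|x j 0| ^+ 2.
Proof. by rewrite /sqnorm mxE; apply: eq_bigr => j _; rewrite !mxE normCK mulrC. Qed.

Lemma sqnorm_ge0 p (x : 'cV[C]_p) : 0 <= sqnorm x.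
Proof. by rewrite sqnormE sumr_ge0 // => j _; rewrite exprn_ge0. Qed.

Lemma diag_form_le p (l : 'rV[C]_p) (x : 'cV[C]_p) :
  (forall j, l 0 j <= 1) -> (adjmx x *m diag_mx l *m x) 0 0 <= sqnorm x.
Proof.
move=> l_le1; rewrite mul_mx_diag mxE sqnormE; apply: ler_sum => j _.
rewrite !mxE normCK mulrAC mulrC [_^* * _]mulrC.
exact: ler_piMl (mul_conjC_ge0 _) (l_le1 j).
Qed.

Lemma sqnorm_mul_le_adjmx p q (S : 'M[C]_(p, q)) :
  (forall y, sqnorm (adjmx S *m y) <= sqnorm y) ->
  forall x, sqnorm (S *m x) <= sqnorm x.
Proof.
move=> adjS_le x; set M := adjmx S *m S.
have SxE : sqnorm (S *m x) = (adjmx x *m M *m x) 0 0.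
  by rewrite /sqnorm adjmxM /M !mulmxA.
have Mx_le : sqnorm (M *m x) <= sqnorm (S *m x) by rewrite -mulmxA adjS_le.
(* 0 <= |Mx - x|^2 = |Mx|^2 - 2 |Sx|^2 + |x|^2 <= |x|^2 - |Sx|^2 *)
have := sqnorm_ge0 (M *m x - x).
have -> : sqnorm (M *m x - x) =
    sqnorm (M *m x) - (sqnorm (S *m x) + sqnorm (S *m x)) + sqnorm x.
  have adjM : adjmx M = M by rewrite /M adjmxM adjmxK.
  rewrite SxE /sqnorm adjmxD adjmxN adjmxM adjM.
  rewrite !mulmxDl !mulmxDr !mulmxN !mulNmx !mulmxA opprK !mxE; ring.
move: Mx_le; rewrite -subr_ge0 => le1 le2; rewrite -subr_ge0.
have := addr_ge0 le1 le2; congr (0 <= _); ring.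
Qed.

Lemma spectralmx_adjmx k (P : 'M[C]_k) : spectralmx P *m adjmx (spectralmx P) = 1%:M.
Proof. by rewrite -adjmx_sesqui; apply/unitarymxP/spectral_unitarymx. Qed.

Lemma hermitian_spectralE k (P : 'M[C]_k) : adjmx P = P ->
  P = adjmx (spectralmx P) *m diag_mx (spectral_diag P) *m spectralmx P.
Proof.
move=> P_herm.
have /orthomx_spectralP : P \is normalmx by rewrite qualifE adjmx_sesqui P_herm.
by rewrite invmx_unitary ?spectral_unitarymx // adjmx_sesqui.
Qed.

Lemma spectral_diag_unit k (P : 'M[C]_k) :
  adjmx P = P ->
  (forall mu (v : 'cV[C]_k), v != 0 -> P *m v = mu *: v -> 0 <= mu <= 1) ->
  forall j, 0 <= spectral_diag P 0 j <= 1.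
Proof.
move=> P_herm P_spec j; set V := spectralmx P.
have VVadj : V *m adjmx V = 1%:M := spectralmx_adjmx P.
have PVadj : P *m adjmx V = adjmx V *m diag_mx (spectral_diag P).
  by rewrite [in LHS](hermitian_spectralE P_herm) -!mulmxA VVadj mulmx1.
apply: (P_spec _ (col j (adjmx V))).
  apply/eqP => col0; move/matrixP: VVadj => /(_ j j); rewrite !mxE eqxx /=.
  rewrite big1 => [/eqP|t _]; first by rewrite eq_sym oner_eq0.
  by have /matrixP/(_ t 0) := col0; rewrite !mxE => ->; rewrite mulr0.
apply/matrixP => i i'; rewrite !mxE.
move/matrixP: PVadj => /(_ i j); rewrite mul_mx_diag !mxE mulrC => <-.
by apply: eq_bigr => t _; rewrite !mxE.
Qed.

Lemma hermitian_unit_spectrum_factor k (P : 'M[C]_k) :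
  adjmx P = P ->
  (forall mu (v : 'cV[C]_k), v != 0 -> P *m v = mu *: v -> 0 <= mu <= 1) ->
  exists2 Q : 'M[C]_k, P = adjmx Q *m Q & forall x, sqnorm (Q *m x) <= sqnorm x.
Proof.
move=> P_herm P_spec; have d_unit := spectral_diag_unit P_herm P_spec.
set V := spectralmx P; set d := spectral_diag P.
set D := diag_mx (\row_j sqrtC (d 0 j)).
have D_herm : adjmx D = D.
  rewrite /D adjmx_diag; congr diag_mx; apply/matrixP => i j; rewrite !mxE.
  by rewrite conj_Creal // sqrtC_real //; case/andP: (d_unit j).
have DD : D *m D = diag_mx d.
  rewrite /D mulmx_diag; congr diag_mx; apply/matrixP => i j.
  by rewrite !mxE -expr2 sqrtCK (ord1 i).
exists (D *m V).
  by rewrite adjmxM D_herm mulmxA -(mulmxA _ D D) DD -hermitian_spectralE.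
move=> x; have -> : sqnorm (D *m V *m x) = (adjmx (V *m x) *m diag_mx d *m (V *m x)) 0 0.
  by rewrite /sqnorm !adjmxM D_herm !mulmxA -(mulmxA _ D D) DD.
have VadjV : adjmx V *m V = 1%:M by apply/mulmx1C/spectralmx_adjmx.
have -> : sqnorm x = sqnorm (V *m x).
  by rewrite /sqnorm adjmxM !mulmxA -(mulmxA _ (adjmx V)) VadjV mulmx1.
by apply: diag_form_le => j; case/andP: (d_unit j).
Qed.

Lemma sqnorm_sandwich_le r k (c : 'M[C]_(r, k)) (P : 'M[C]_k) (l : 'rV[C]_r) :
  adjmx P = P ->
  (forall mu (v : 'cV[C]_k), v != 0 -> P *m v = mu *: v -> 0 <= mu <= 1) ->
  c *m P *m adjmx c = diag_mx l -> (forall j, l 0 j <= 1) ->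
  forall a, sqnorm (c *m P *m a) <= sqnorm a.
Proof.
move=> P_herm P_spec cPc l_le1 a.
have [Q PE Q_le] := hermitian_unit_spectrum_factor P_herm P_spec.
set S := c *m adjmx Q.
have SSadj : S *m adjmx S = diag_mx l.
  by rewrite /S adjmxM adjmxK mulmxA -(mulmxA c) -PE.
have S_le : forall x, sqnorm (S *m x) <= sqnorm x.
  apply: sqnorm_mul_le_adjmx => y.
  by rewrite /sqnorm adjmxM adjmxK mulmxA -(mulmxA _ S) SSadj diag_form_le.
apply: le_trans (Q_le a); rewrite PE !mulmxA -(mulmxA _ Q).
exact: S_le.
Qed.

Lemma sum_norm_mul_conj_le k (a w : 'cV[C]_k) :
  sqnorm w <= sqnorm a -> \sum_j `|a j 0 * (w j 0)^*| <= sqnorm a.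
Proof.
move=> w_le_a; apply: (@le_trans _ _ ((sqnorm a + sqnorm w) / 2)); last first.
  by rewrite ler_pdivrMr ?ltr0n // mulr_natr mulr2n lerD2l.
rewrite !sqnormE -big_split /= mulr_suml; apply: ler_sum => j _.
rewrite normrM norm_conjC ler_pdivlMr ?ltr0n // -subr_ge0.
set x := `|a j 0|; set y := `|w j 0|.
have -> : x ^+ 2 + y ^+ 2 - x * y * 2 = (x - y) ^+ 2 by ring.
by rewrite -realEsqr rpredB ?normr_real.
Qed.

End Contractions.

Section OrthonormalBasis.
Variables (C : numClosedFieldType) (V : vectType C) (m : nat).
Variables (ip : V -> V -> C) (Y : 'I_m -> V).
Hypothesis ip_linear_r : forall Z a X W, ip Z (a *: X + W) = a * ip Z X + ip Z W.
Hypothesis ip_antilinear_l : forall Z a X W, ip (a *: X + W) Z = a^* * ip X Z + ip W Z.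
Hypothesis Y_orthonormal : forall i j, ip (Y i) (Y j) = (i == j)%:R.
Hypothesis dimV : dim V = m.

Lemma ip0r Z : ip Z 0 = 0.
Proof.
have := ip_linear_r Z 1 0 0; rewrite scaler0 add0r mul1r -{1}[ip Z 0]addr0.
by move/addrI/esym.
Qed.

Lemma ipZr Z a X : ip Z (a *: X) = a * ip Z X.
Proof. by rewrite -[a *: X]addr0 ip_linear_r ip0r addr0. Qed.

Lemma ipDr Z X W : ip Z (X + W) = ip Z X + ip Z W.
Proof. by have := ip_linear_r Z 1 X W; rewrite scale1r mul1r. Qed.

Lemma ip_sumr Z (c : 'I_m -> C) (W : 'I_m -> V) :
  ip Z (\sum_j c j *: W j) = \sum_j c j * ip Z (W j).
Proof.
rewrite (big_morph (ip Z) (ipDr Z) (ip0r Z)).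
by apply: eq_bigr => j _; rewrite ipZr.
Qed.

Lemma ip0l Z : ip 0 Z = 0.
Proof.
have := ip_antilinear_l Z 1 0 0; rewrite scaler0 add0r conjC1 mul1r.
by rewrite -{1}[ip 0 Z]addr0 => /addrI/esym.
Qed.

Lemma ipZl Z a X : ip (a *: X) Z = a^* * ip X Z.
Proof. by rewrite -[a *: X]addr0 ip_antilinear_l ip0l addr0. Qed.

Lemma ipDl Z X W : ip (X + W) Z = ip X Z + ip W Z.
Proof. by have := ip_antilinear_l Z 1 X W; rewrite scale1r conjC1 mul1r. Qed.

Lemma ip_suml Z (c : 'I_m -> C) (W : 'I_m -> V) :
  ip (\sum_j c j *: W j) Z = \sum_j (c j)^* * ip (W j) Z.
Proof.
rewrite (big_morph (ip^~ Z) (fun X W => ipDl Z X W) (ip0l Z)).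
by apply: eq_bigr => j _; rewrite ipZl.
Qed.

Lemma ip_sumY (c : 'I_m -> C) j : ip (Y j) (\sum_i c i *: Y i) = c j.
Proof.
rewrite ip_sumr (bigD1 j) //= Y_orthonormal eqxx mulr1 big1 ?addr0 // => i ij.
by rewrite Y_orthonormal eq_sym (negbTE ij) mulr0.
Qed.

Lemma onb_expansion X : X = \sum_j ip (Y j) X *: Y j.
Proof.
set T := [tuple Y i | i < m].
have TE (i : 'I_m) : T`_i = Y i by rewrite -tnth_nth tnth_mktuple.
have T_free : free T.
  apply/freeP => c c0 i; have := congr1 (ip (Y i)) c0.
  by under eq_bigr => j _ do rewrite TE; rewrite ip_sumY ip0r.
have : X \in <<T>>%VS.
  suff -> : <<T>>%VS = fullv by rewrite memvf.
  by apply/eqP; rewrite eqEdim subvf /= dimvf dimV (eqP T_free) size_tuple.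
move/coord_span; under eq_bigr => j _ do rewrite TE.
by move=> XE; rewrite {1}XE; apply: eq_bigr => j _; rewrite {2}XE ip_sumY.
Qed.

Lemma ip_expand X W : ip X W = \sum_j (ip (Y j) X)^* * ip (Y j) W.
Proof. by rewrite {1}(onb_expansion X) ip_suml. Qed.

Lemma ip_conj X W : (ip X W)^* = ip W X.
Proof.
rewrite !ip_expand rmorph_sum; apply: eq_bigr => j _.
by rewrite rmorphM /= conjCK mulrC.
Qed.

Lemma ip_nondegenerate Z : (forall W, ip Z W = 0) -> Z = 0.
Proof.
move=> Z_perp; rewrite (onb_expansion Z) big1 // => j _.
by rewrite -ip_conj Z_perp rmorph0 scale0r.
Qed.

Definition coordv X : 'cV[C]_m := \col_j ip (Y j) X.

Definition vec_of_coordv (v : 'cV[C]_m) : V := \sum_j v j 0 *: Y j.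

Lemma coordvK : cancel coordv vec_of_coordv.
Proof.
by move=> X; rewrite [RHS]onb_expansion; apply: eq_bigr => j _; rewrite mxE.
Qed.

Lemma vec_of_coordvK : cancel vec_of_coordv coordv.
Proof. by move=> v; apply/matrixP => j i; rewrite (ord1 i) mxE ip_sumY. Qed.

Lemma coordvZ a X : coordv (a *: X) = a *: coordv X.
Proof. by apply/matrixP => j i; rewrite !mxE ipZr. Qed.

Lemma ip_coordv X W : ip X W = (adjmx (coordv X) *m coordv W) 0 0.
Proof. by rewrite ip_expand mxE; apply: eq_bigr => j _; rewrite !mxE. Qed.

Definition coordmx (F : V -> V) : 'M[C]_m := \matrix_(j, k) ip (Y j) (F (Y k)).

Lemma coordv_linear (F : {linear V -> V}) X : coordv (F X) = coordmx F *m coordv X.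
Proof.
apply/matrixP => j i; rewrite (ord1 i) !mxE {1}(onb_expansion X) linear_sum.
under eq_bigr => k _ do rewrite linearZ /=.
by rewrite ip_sumr; apply: eq_bigr => k _; rewrite !mxE mulrC.
Qed.

Lemma coordmx_comp (F : {linear V -> V}) (G : V -> V) :
  coordmx (F \o G) = coordmx F *m coordmx G.
Proof.
apply/matrixP => j k; have /matrixP/(_ j 0) := coordv_linear F (G (Y k)).
by rewrite !mxE => ->; apply: eq_bigr => t _; rewrite !mxE.
Qed.

Definition ip_selfadjoint (F : V -> V) := forall X W, ip X (F W) = ip (F X) W.

Lemma adjmx_coordmx F : ip_selfadjoint F -> adjmx (coordmx F) = coordmx F.
Proof. by move=> F_sa; apply/matrixP => j k; rewrite !mxE ip_conj F_sa. Qed.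

Lemma coordmx_eigen (F : {linear V -> V}) mu v :
  coordmx F *m v = mu *: v -> F (vec_of_coordv v) = mu *: vec_of_coordv v.
Proof.
move=> Fv; apply: (can_inj coordvK).
by rewrite coordv_linear coordvZ vec_of_coordvK.
Qed.

Theorem sum_abs_ip_le (P Cm : {linear V -> V}) (lam : 'I_m -> C) (A : V) :
  ip_selfadjoint P -> ip_selfadjoint Cm ->
  (forall mu Z, Z != 0 -> P Z = mu *: Z -> 0 <= mu <= 1) ->
  (forall j, Cm (P (Cm (Y j))) = lam j *: Y j) -> (forall j, lam j <= 1) ->
  \sum_j `|ip (Y j) A * ip A (P (Cm (Y j)))| <= ip A A.
Proof.
move=> P_sa Cm_sa P_spec CPC lam_le1.
set c := coordmx Cm; set p := coordmx P; set a := coordv A.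
have p_spec mu (v : 'cV[C]_m) : v != 0 -> p *m v = mu *: v -> 0 <= mu <= 1.
  move=> v0 pv; apply: (P_spec mu (vec_of_coordv v)); last exact: coordmx_eigen.
  apply: contraNneq v0 => v0'; rewrite -(vec_of_coordvK v) v0'.
  by apply/eqP/matrixP => j i; rewrite !mxE ip0r.
have cpc : c *m p *m adjmx c = diag_mx (\row_j lam j).
  rewrite /c /p (adjmx_coordmx Cm_sa) -coordmx_comp -(coordmx_comp (Cm \o P)).
  apply/matrixP => j k.
  by rewrite !mxE /= CPC ipZr Y_orthonormal; case: eqP => [->|_]; rewrite ?mulr1 ?mulr0.
have alphaE j : ip A (P (Cm (Y j))) = ((c *m p *m a) j 0)^*.
  by rewrite -ip_conj -P_sa -Cm_sa -mulmxA -!coordv_linear !mxE.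
rewrite ip_coordv -/a -/(sqnorm a).
have aE j : ip (Y j) A = a j 0 by rewrite mxE.
under eq_bigr => j _ do rewrite alphaE aE.
apply/sum_norm_mul_conj_le/(sqnorm_sandwich_le (adjmx_coordmx P_sa) p_spec cpc).
by move=> j; rewrite mxE.
Qed.

End OrthonormalBasis.

Section GibbsInnerProduct.
Variables (R : realType) (d : nat) (U : 'M[R[i]]_d) (ev : 'I_d -> R) (beta s : R).

Local Notation ip := (q_s_inner beta U ev s).

Lemma q_adjmxE p q (A : 'M[R[i]]_(p, q)) : q_adjmx A = adjmx A.
Proof. by []. Qed.

Lemma q_s_inner_linear_r Z a X W : ip Z (a *: X + W) = a * ip Z X + ip Z W.
Proof.
by rewrite /q_s_inner mulmxDr mulmxDl -scalemxAr -scalemxAl mxtraceD mxtraceZ.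
Qed.

Lemma q_s_inner_antilinear_l Z a X W : ip (a *: X + W) Z = a^* * ip X Z + ip W Z.
Proof.
by rewrite /q_s_inner !q_adjmxE adjmxD adjmxZ !mulmxDl -!scalemxAl mxtraceD mxtraceZ.
Qed.

Lemma adjmx_q_specfun f : adjmx (q_specfun U ev f) = q_specfun U ev f.
Proof.
apply: adjmx_conj_diag => j; rewrite mxE.
by rewrite conj_Creal //; apply/complex_realP; eexists.
Qed.

Lemma q_s_inner_mxtrace X W :
  ip X W = \tr (adjmx (q_gibbs_pow beta U ev (1 - s) *m X *m q_gibbs_pow beta U ev s) *m W).
Proof.
have := adjmx_q_specfun (fun x => q_gibbs_weight beta ev x `^ s).
have := adjmx_q_specfun (fun x => q_gibbs_weight beta ev x `^ (1 - s)).
rewrite /q_s_inner /q_gibbs_pow q_adjmxE.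
move: (q_specfun _ _ _) (q_specfun _ _ _) => P Q P_herm Q_herm.
by rewrite !adjmxM P_herm Q_herm mxtrace_mulC !mulmxA.
Qed.

Lemma q_gibbs_weight_ge0 x : 0 <= q_gibbs_weight beta ev x.
Proof.
by rewrite divr_ge0 ?expR_ge0 // sumr_ge0 // => k _; rewrite expR_ge0.
Qed.

Lemma q_gibbs_pow1 : q_gibbs_pow beta U ev 1 = q_gibbs beta U ev.
Proof.
congr (_ *m diag_mx _ *m _); apply/matrixP => i j.
by rewrite !mxE powRr1 ?q_gibbs_weight_ge0.
Qed.

Hypothesis U_unitary : q_is_unitary U.

Lemma q_gibbs_powD p q : p + q != 0 ->
  q_gibbs_pow beta U ev p *m q_gibbs_pow beta U ev q = q_gibbs_pow beta U ev (p + q).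
Proof.
move=> pq0; rewrite /q_gibbs_pow /q_specfun !q_adjmxE.
rewrite -!mulmxA; congr (_ *m _); rewrite !mulmxA -(mulmxA _ (adjmx U)) U_unitary mulmx1.
rewrite mulmx_diag; congr (diag_mx _ *m _); apply/matrixP => i j; rewrite !mxE.
by rewrite -rmorphM /= -powRD // (negbTE pq0).
Qed.

Lemma q_s_inner1l X : ip 1%:M X = \tr (X *m q_gibbs beta U ev).
Proof.
rewrite q_s_inner_mxtrace mulmx1 q_gibbs_powD subrK ?oner_eq0 // q_gibbs_pow1.
by rewrite adjmx_q_specfun mxtrace_mulC.
Qed.

End GibbsInnerProduct.

Section KrausMaps.
Variables (R : realType) (d : nat) (I : finType) (K : I -> 'M[R[i]]_d).

Lemma q_kraus_adj_is_linear : linear (q_kraus_adj K).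
Proof.
move=> a X W; rewrite /q_kraus_adj scaler_sumr -big_split /=.
by apply: eq_bigr => u _; rewrite mulmxDr mulmxDl -scalemxAr -scalemxAl.
Qed.

HB.instance Definition _ := GRing.isLinear.Build R[i] 'M[R[i]]_d 'M[R[i]]_d *:%R
  (q_kraus_adj K) q_kraus_adj_is_linear.

Lemma q_kraus_adj1 : q_is_channel K -> q_kraus_adj K 1%:M = 1%:M.
Proof. by move=> K_tp; rewrite -[RHS]K_tp; apply: eq_bigr => u _; rewrite mulmx1. Qed.

Lemma mxtrace_q_kraus_adj X W :
  \tr (adjmx X *m q_kraus_adj K W) = \tr (adjmx (q_kraus_map K X) *m W).
Proof.
rewrite /q_kraus_adj /q_kraus_map mulmx_sumr (big_morph _ (@adjmxD _ _ _) (@adjmx0 _ _ _)).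
rewrite mulmx_suml !raddf_sum /=; apply: eq_bigr => u _.
by rewrite !q_adjmxE !adjmxM adjmxK !mulmxA mxtrace_mulC !mulmxA.
Qed.

Variables (U : 'M[R[i]]_d) (ev : 'I_d -> R) (beta s : R).
Local Notation ip := (q_s_inner beta U ev s).

(* With G X := rho^(1-s) X rho^s, ip X W = tr((G X)^dagger W), so detailed balance turns an
   eigenvector Z of K^dagger into the eigenvector G Z of K. *)
Lemma q_kraus_adj_spectrum :
  q_s_detailed_balance ip (q_kraus_adj K) ->
  (forall (mu : R[i]) X, X != 0 -> q_kraus_map K X = mu *: X -> 0 <= mu <= 1) ->
  (forall Z, (forall W, ip Z W = 0) -> Z = 0) ->
  forall mu Z, Z != 0 -> q_kraus_adj K Z = mu *: Z -> 0 <= mu <= 1.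
Proof.
move=> K_db K_spec ip_nondeg mu Z Z0 KZ.
set G := q_gibbs_pow beta U ev (1 - s) *m Z *m q_gibbs_pow beta U ev s.
apply: (K_spec mu G).
  apply: contraNneq Z0 => G0; apply/eqP/ip_nondeg => W.
  by rewrite q_s_inner_mxtrace -/G G0 adjmx0 mul0mx mxtrace0.
apply/eqP; rewrite -subr_eq0; apply/eqP/mxtrace_adjmx_eq0 => W.
rewrite adjmxD adjmxN adjmxZ mulmxDl mulNmx -scalemxAl mxtraceD raddfN /= mxtraceZ.
rewrite -mxtrace_q_kraus_adj -q_s_inner_mxtrace K_db KZ.
by rewrite (ipZl (@q_s_inner_antilinear_l _ _ _ _ _ _)) q_s_inner_mxtrace subrr.
Qed.

End KrausMaps.

Section Measurement.
Variables (R : realType) (d : nat) (J : finType) (O : J -> 'M[R[i]]_d) (out : J -> R).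
Variable rho : 'M[R[i]]_d.
Hypothesis rho_herm : adjmx rho = rho.

Lemma q_meas_mean_real : (q_meas_mean O out rho)^* = q_meas_mean O out rho.
Proof.
rewrite /q_meas_mean rmorph_sum; apply: eq_bigr => u _.
rewrite rmorphM /= conjC_mxtrace !q_adjmxE !adjmxM adjmxK rho_herm mulmxA.
by rewrite conj_Creal //; apply/complex_realP; eexists.
Qed.

Lemma q_meas_cov_mxtrace : q_meas_cov O out rho =
  \tr (q_meas_hat_adj O out rho (q_meas_hat_adj O out rho 1%:M) *m rho).
Proof.
set E := q_meas_mean O out rho.
have shift_real x : ((out x)%:C%C - E)^* = (out x)%:C%C - E.
  rewrite rmorphB /= q_meas_mean_real; congr (_ - _).
  by rewrite conj_Creal //; apply/complex_realP; eexists.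
have mxtrace_sum (F : J -> 'M[R[i]]_d) : \tr (\sum_x F x) = \sum_x \tr (F x).
  exact: (big_morph _ (@mxtraceD _ _) (mxtrace0 _ _)).
rewrite /q_meas_cov /q_meas_hat_adj -/E mulmx_suml mxtrace_sum; apply: eq_bigr => x _.
rewrite shift_real -scalemxAl mxtraceZ mulmx_sumr !mulmx_suml mxtrace_sum mulr_sumr.
apply: eq_bigr => y _; rewrite shift_real -scalemxAr -!scalemxAl mxtraceZ mulrA.
congr (_ * _); rewrite !q_adjmxE mulmx1.
rewrite -[O y *m O x *m rho *m adjmx (O x) *m adjmx (O y)]mulmxA mxtrace_mulC !mulmxA.
by rewrite mxtrace_mulC !mulmxA.
Qed.

End Measurement.

Unset Implicit Arguments.

Theorem lemma5p4
  (R : realType) (n : nat)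
  (* Hermitian H = U diag(ev) U^dagger, inverse temperature beta > 0 *)
  (H : 'M[R[i]]_(2 ^ n)) (U : 'M[R[i]]_(2 ^ n)) (ev : 'I_(2 ^ n) -> R)
  (hU : q_is_unitary U) (hH : H = q_specfun U ev id)
  (beta : R) (hbeta : 0 < beta) (s : R)
  (* channel N with Kraus operators K *)
  (I : finType) (K : I -> 'M[R[i]]_(2 ^ n)) (hN : q_is_channel K)
  (* channel M with Kraus operators O indexed by distinct real outcomes *)
  (J : finType) (O : J -> 'M[R[i]]_(2 ^ n)) (out : J -> R)
  (hout : injective out) (hM : q_is_channel O)
  (* basis Y and eigenvalues lam *)
  (Y : 'I_(2 ^ n * 2 ^ n) -> 'M[R[i]]_(2 ^ n)) (lam : 'I_(2 ^ n * 2 ^ n) -> R) :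
  let rho := q_gibbs beta U ev in
  let ip := q_s_inner beta U ev s in
  let Eadj := fun X => q_kraus_adj O (q_kraus_adj K (q_kraus_adj O X)) in
  let Ehatadj := fun X => q_meas_hat_adj O out rho (q_kraus_adj K (q_kraus_adj O X)) in
  let alpha := fun i j => ip (Y j) (Ehatadj (Y i)) in
  (* N and M satisfy s-detailed balance *)
  q_s_detailed_balance ip (q_kraus_adj K) ->
  q_s_detailed_balance ip (q_kraus_adj O) ->
  (* rho is the unique fixed state of N *)
  q_kraus_map K rho = rho ->
  (forall sigma, q_is_state sigma -> q_kraus_map K sigma = sigma -> sigma = rho) ->
  (* the spectrum of N is contained in [0,1] *)
  (forall (mu : R[i]) (X : 'M[R[i]]_(2 ^ n)),
      X != 0 -> q_kraus_map K X = mu *: X -> (0 <= mu <= 1)) ->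
  (* {Y_i} orthonormal basis of eigenvectors of E^dagger *)
  (forall i j, ip (Y i) (Y j) = (i == j)%:R) ->
  (forall i, Eadj (Y i) = ((lam i)%:C)%C *: Y i) ->
  Y (idx1 n) = 1%:M ->
  lam (idx1 n) = 1 ->
  (forall i, i != idx1 n -> lam i < 1) ->
  (forall i j : 'I_(2 ^ n * 2 ^ n), (i <= j)%N -> lam j <= lam i) ->
  (forall i, 0 <= lam i) ->
  (* hat M satisfies s-detailed balance *)
  q_s_detailed_balance ip (q_meas_hat_adj O out rho) ->
  \sum_(j < 2 ^ n * 2 ^ n) `|alpha (idx1 n) j * alpha j (idx1 n)|
    <= q_meas_cov O out rho.
Proof.
move=> rho ip Eadj Ehatadj alpha K_db O_db _ _ K_spec Y_on Y_eig Y1 lam1 _ lam_anti _ Mhat_db.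
have ip_lin := @q_s_inner_linear_r R _ U ev beta s.
have ip_alin := @q_s_inner_antilinear_l R _ U ev beta s.
have dimM : dim 'M[R[i]]_(2 ^ n) = (2 ^ n * 2 ^ n)%N by rewrite dim_matrix.
have rho_herm : adjmx rho = rho := adjmx_q_specfun U ev _.
set A := q_meas_hat_adj O out rho 1%:M.
have alpha_1j j : alpha (idx1 n) j = ip (Y j) A.
  by rewrite /alpha /Ehatadj Y1 (q_kraus_adj1 hM) (q_kraus_adj1 hN).
have alpha_j1 j : alpha j (idx1 n) = ip A (q_kraus_adj K (q_kraus_adj O (Y j))).
  by rewrite /alpha /Ehatadj Y1 -Mhat_db.
have covE : q_meas_cov O out rho = ip A A.
  by rewrite (q_meas_cov_mxtrace _ _ rho_herm) -(@q_s_inner1l _ _ U ev beta s hU) -/ip Mhat_db.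
have N_spec := q_kraus_adj_spectrum K_db K_spec (ip_nondegenerate ip_lin ip_alin Y_on dimM).
rewrite covE; under eq_bigr => j _ do rewrite alpha_1j alpha_j1.
apply: (sum_abs_ip_le ip_lin ip_alin Y_on dimM A K_db O_db N_spec Y_eig) => j.
by rewrite lecR -lam1 lam_anti.
Qed.
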